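(* Let $E=(\mathbb{R}^n,\|\cdot\|)$ be a normed space in which the unit vectors $e_1,\dots,e_n$ have norm one, and let $e_1^*,\dots,e_n^*$ be the coordinate functionals. Define $c_1=\max\{c\ge0:\forall A\subset\{1,\dots,n\}\ \exists x^*\in B_{E^*}:\ x^*(e_i)\ge c\ (i\in A),\ x^*(e_i)=0\ (i\notin A)\}$, $c_2=\max\{c\ge0:\sum_i b_ie_i^*\in B_{E^*}\text{ whenever }\max_i|b_i|\le c\}$, $c_3=\min\{\|\sum_{i=1}^na_ie_i\|:\sum_{i=1}^n|a_i|=1\}$. Then $c_1\ge c_2=c_3\ge\frac12c_1$.
   Context: $B_{E^*}$ is the closed unit ball of the dual space $E^*$. *)

From HB Require Import structures.
From mathcomp Require Import all_boot all_order all_algebra.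
From mathcomp Require Import all_classical all_reals.
Set Implicit Arguments. Unset Strict Implicit. Unset Printing Implicit Defensive.
Import Order.TTheory GRing.Theory Num.Theory.
Local Open Scope ring_scope.
Local Open Scope classical_set_scope.

Definition is_norm (R : realType) (n : nat) (N : 'rV[R]_n -> R) : Prop :=
  [/\ forall x y, N (x + y) <= N x + N y,
      forall (a : R) x, N (a *: x) = `|a| * N x
    & forall x, N x = 0 -> x = 0].

Definition evec (R : realType) (n : nat) (i : 'I_n) : 'rV[R]_n := delta_mx 0 i.

(* The functional sum_i b_i e_i^* (i.e. x |-> sum_i b_i x_i) lies in B_{E^*}. *)
Definition in_dual_ball (R : realType) (n : nat) (N : 'rV[R]_n -> R)
  (b : 'rV[R]_n) : Prop :=
  forall x : 'rV[R]_n, `|\sum_(i < n) b 0 i * x 0 i| <= N x.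

Definition c1 (R : realType) (n : nat) (N : 'rV[R]_n -> R) : R :=
  sup [set c : R | 0 <= c /\
    forall A : {set 'I_n}, exists b : 'rV[R]_n,
      [/\ in_dual_ball N b,
          (forall i, i \in A -> c <= b 0 i)
        & (forall i, i \notin A -> b 0 i = 0)]].

Definition c2 (R : realType) (n : nat) (N : 'rV[R]_n -> R) : R :=
  sup [set c : R | 0 <= c /\
    forall b : 'rV[R]_n, (forall i, `|b 0 i| <= c) -> in_dual_ball N b].

Definition c3 (R : realType) (n : nat) (N : 'rV[R]_n -> R) : R :=
  inf [set N a | a in [set a : 'rV[R]_n | \sum_(i < n) `|a 0 i| = 1]].

From HB Require Import structures.
From mathcomp Require Import all_boot all_order all_algebra.
From mathcomp Require Import all_classical all_reals.
Import Order.TTheory GRing.Theory Num.Theory.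
Local Open Scope ring_scope.
Local Open Scope classical_set_scope.
Set Implicit Arguments. Unset Strict Implicit. Unset Printing Implicit Defensive.

(* All three constants compare the norm with the l1-norm |a|_1 = sum_i |a_i|.
   Since |sum_i b_i a_i| <= max_i |b_i| * |a|_1 with equality for b a multiple
   of the sign vector of a, c2 is the best constant c with c |a|_1 <= N a, which
   is c3.  A box of half-width c2 lies in the dual ball, whence c2 <= c1.
   Conversely, if c is admissible for c1, take functionals b, b' that are >= c
   on the positive resp. negative coordinates of a and vanish elsewhere; then
   c |a|_1 <= b(a) - b'(a) <= 2 N a, so c <= 2 c3. *)

Section DualPairing.
Variables (R : realType) (n : nat).

Lemma pairing_evec (b : 'rV[R]_n) i :
  \sum_(j < n) b 0 j * evec R i 0 j = b 0 i.
Proof.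
rewrite (bigD1 i) //= big1 ?addr0; first by rewrite mxE !eqxx mulr1.
by move=> j ji; rewrite mxE (negbTE ji) andbF mulr0.
Qed.

Lemma l1_evec (i : 'I_n) : \sum_(j < n) `|evec R i 0 j| = 1.
Proof.
rewrite (bigD1 i) //= big1 ?addr0; first by rewrite mxE !eqxx normr1.
by move=> j ji; rewrite mxE (negbTE ji) andbF normr0.
Qed.

Lemma pairing_le_l1 (c : R) (b : 'rV[R]_n) : (forall i, `|b 0 i| <= c) ->
  forall x : 'rV[R]_n, `|\sum_(i < n) b 0 i * x 0 i| <= c * \sum_(i < n) `|x 0 i|.
Proof.
move=> bc x; rewrite mulr_sumr; apply: le_trans (ler_norm_sum _ _ _) _.
by apply: ler_sum => i _; rewrite normrM ler_wpM2r.
Qed.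

Lemma pairing_sign (c : R) (a : 'rV[R]_n) :
  \sum_(i < n) (\row_j (if 0 <= a 0 j then c else - c)) 0 i * a 0 i
  = c * \sum_(i < n) `|a 0 i|.
Proof.
rewrite mulr_sumr; apply: eq_bigr => i _; rewrite mxE.
have [a_ge0|a_lt0] := leP 0 (a 0 i); first by rewrite ger0_norm.
by rewrite ltr0_norm // mulrN mulNr.
Qed.

End DualPairing.

Section NormConstants.
Variables (R : realType) (n : nat) (N : 'rV[R]_n -> R).
Hypothesis normN : is_norm N.
Hypothesis n_gt0 : (0 < n)%N.
Hypothesis evec_norm1 : forall i : 'I_n, N (evec R i) = 1.

Let S1 := [set c : R | 0 <= c /\
    forall A : {set 'I_n}, exists b : 'rV[R]_n,
      [/\ in_dual_ball N b,
          (forall i, i \in A -> c <= b 0 i)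
        & (forall i, i \notin A -> b 0 i = 0)]].
Let S2 := [set c : R | 0 <= c /\
    forall b : 'rV[R]_n, (forall i, `|b 0 i| <= c) -> in_dual_ball N b].
Let S3 := [set N a | a in [set a : 'rV[R]_n | \sum_(i < n) `|a 0 i| = 1]].

Lemma norm0 : N 0 = 0.
Proof. by case: normN => _ normZ _; rewrite -(scale0r 0) normZ normr0 mul0r. Qed.

Lemma norm_ge0 (x : 'rV[R]_n) : 0 <= N x.
Proof.
case: normN => normD normZ _.
have := normD x ((-1) *: x).
rewrite normZ scaleN1r subrr norm0 normrN normr1 mul1r -mulr2n.
by rewrite -mulr_natr pmulr_lge0.
Qed.

Lemma in_dual_ball_l1 (c : R) (b : 'rV[R]_n) :
  (forall x : 'rV[R]_n, c * \sum_(i < n) `|x 0 i| <= N x) ->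
  (forall i, `|b 0 i| <= c) -> in_dual_ball N b.
Proof. by move=> cN bc x; exact: le_trans (pairing_le_l1 bc x) (cN x). Qed.

Lemma S1_0 : S1 0.
Proof.
split=> // A; exists 0; split=> [x|i _|i _]; rewrite ?mxE //.
by rewrite big1 ?normr0 ?norm_ge0 // => i _; rewrite mxE mul0r.
Qed.

Lemma S2_0 : S2 0.
Proof.
split=> // b b0; apply: (in_dual_ball_l1 (c:=0)) => // x.
by rewrite mul0r norm_ge0.
Qed.

Lemma c3_l1_le (x : 'rV[R]_n) : c3 N * \sum_(i < n) `|x 0 i| <= N x.
Proof.
set s := \sum_(i < n) `|x 0 i|.
have [->|s_neq0] := eqVneq s 0; first by rewrite mulr0 norm_ge0.
have s_gt0 : 0 < s by rewrite lt_def s_neq0 sumr_ge0.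
have : c3 N <= N (s^-1 *: x).
  apply: ge_inf; first by exists 0 => _ [a _ <-]; apply: norm_ge0.
  exists (s^-1 *: x) => //=.
  under eq_bigr => i _ do rewrite mxE normrM gtr0_norm ?invr_gt0 //.
  by rewrite -mulr_sumr mulVf.
case: normN => _ normZ _.
by rewrite normZ gtr0_norm ?invr_gt0 // ler_pdivlMl // mulrC.
Qed.

Let i0 : 'I_n := Ordinal n_gt0.

Lemma S3_neq0 : S3 !=set0.
Proof. by exists (N (evec R i0)); exists (evec R i0); rewrite //= l1_evec. Qed.

Lemma S1_ub : has_ubound S1.
Proof.
exists 1 => c [_ /(_ [set i0]%SET)] [b [b_dual b_pos _]].
have := b_dual (evec R i0); rewrite pairing_evec evec_norm1.
by apply: le_trans (le_trans (b_pos _ _) (ler_norm _)); rewrite inE.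
Qed.

Lemma S2_ub : has_ubound S2.
Proof.
exists 1 => c [c_ge0 box_c].
have cst_box i : `|(const_mx c : 'rV[R]_n) 0 i| <= c by rewrite mxE ger0_norm.
by have := box_c _ cst_box (evec R i0); rewrite pairing_evec evec_norm1 mxE ger0_norm.
Qed.

Lemma c2_le_c1 : c2 N <= c1 N.
Proof.
apply: ge_sup; first by exists 0; apply: S2_0.
move=> c [c_ge0 box_c]; apply: ub_le_sup; first exact: S1_ub.
split=> // A.
exists (\row_i (if i \in A then c else 0)); split.
- by apply: box_c => i; rewrite mxE; case: ifP; rewrite ?normr0 ?ger0_norm.
- by move=> i iA; rewrite mxE iA.
- by move=> i iA; rewrite mxE (negbTE iA).
Qed.

Lemma c2_le_c3 : c2 N <= c3 N.
Proof.
apply: ge_sup; first by exists 0; apply: S2_0.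
move=> c [c_ge0 box_c]; apply: lb_le_inf; first exact: S3_neq0.
move=> _ [a /= a_l1 <-].
set sgn := \row_j (if 0 <= a 0 j then c else - c).
have sgn_box i : `|sgn 0 i| <= c by rewrite mxE; case: ifP; rewrite ?normrN ger0_norm.
by have := box_c sgn sgn_box a; rewrite pairing_sign a_l1 mulr1 ger0_norm.
Qed.

Lemma c3_le_c2 : c3 N <= c2 N.
Proof.
apply: ub_le_sup; first exact: S2_ub.
split; last by move=> b; apply: in_dual_ball_l1 c3_l1_le.
by apply: lb_le_inf => [|_ [a _ <-]]; [exact: S3_neq0 | apply: norm_ge0].
Qed.

Lemma S1_l1_le (c : R) (a : 'rV[R]_n) : S1 c -> c * \sum_(i < n) `|a 0 i| <= N a *+ 2.
Proof.
move=> [_ adm_c].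
have [b [b_dual b_pos b_off]] := adm_c [set i | 0 <= a 0 i]%SET.
have [b' [b'_dual b'_neg b'_off]] := adm_c (~: [set i | 0 <= a 0 i]%SET).
have split_a : c * \sum_(i < n) `|a 0 i|
    <= \sum_(i < n) b 0 i * a 0 i - \sum_(i < n) b' 0 i * a 0 i.
  rewrite -sumrB mulr_sumr; apply: ler_sum => i _.
  have [a_ge0|a_lt0] := leP 0 (a 0 i).
    rewrite (b'_off i) ?inE ?negbK // mul0r subr0 ger0_norm // ler_wpM2r //.
    by apply: b_pos; rewrite inE.
  rewrite (b_off i) ?inE -?ltNge // mul0r sub0r ltr0_norm // -mulrN.
  by rewrite ler_wpM2r ?oppr_ge0 ?(ltW a_lt0) // b'_neg // !inE -ltNge.
apply: (le_trans split_a); apply: le_trans (ler_norm _) _.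
by rewrite mulr2n; apply: le_trans (ler_normB _ _) (lerD (b_dual a) (b'_dual a)).
Qed.

Lemma half_c1_le_c3 : c1 N / 2 <= c3 N.
Proof.
rewrite ler_pdivrMr //; apply: ge_sup => [|c S1c]; first by exists 0; apply: S1_0.
rewrite -ler_pdivrMr //; apply: lb_le_inf => [|_ [a /= a_l1 <-]].
  exact: S3_neq0.
by rewrite ler_pdivrMr // mulr_natr -[c]mulr1 -a_l1 S1_l1_le.
Qed.

End NormConstants.

Theorem lemma6 (R : realType) (n : nat) (N : 'rV[R]_n -> R) :
  (0 < n)%N -> is_norm N -> (forall i : 'I_n, N (evec R i) = 1) ->
  [/\ c2 N <= c1 N, c2 N = c3 N & c1 N / 2 <= c3 N].
Proof.
move=> n_gt0 normN evec_norm1.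
split; first exact: c2_le_c1.
  by apply/eqP; rewrite eq_le c2_le_c3 ?c3_le_c2.
exact: half_c1_le_c3.
Qed.
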